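(* Let $(A,[\cdot,\cdot])$ be a Malcev algebra, $(V;[\cdot,\cdot]_V,\rho)$ an $A$-module Malcev algebra, $\lambda\in\mathbb{K}$, and $T:V\to A$ a $\lambda$-weighted $\mathcal{O}$-operator associated to $(V;[\cdot,\cdot]_V,\rho)$. Then $V$ with the bracket $[a,b]_T=\rho(T(a))b-\rho(T(b))a+\lambda[a,b]_V$ is a Malcev algebra, and $T:(V,[\cdot,\cdot]_T)\to(A,[\cdot,\cdot])$ is a homomorphism of Malcev algebras.
   Context: Field $\mathbb{K}$ of characteristic zero. A Malcev algebra is a vector space with anti-symmetric bracket satisfying $J(x,y,[x,z])=[J(x,y,z),x]$, $J(x,y,z)=[[x,y],z]+[[z,x],y]+[[y,z],x]$. A representation of $A$ on $V$ is linear $\rho:A\to\mathrm{End}(V)$ with $\rho([[x,y],z])=\rho(x)\rho(y)\rho(z)-\rho(z)\rho(x)\rho(y)+\rho(y)\rho([z,x])-\rho([y,z])\rho(x)$. An $A$-module Malcev algebra $(V;[\cdot,\cdot]_V,\rho)$ is a Malcev algebra $(V,[\cdot,\cdot]_V)$ with a representation $\rho$ such that for $x,y\in A$, $a,b,c\in V$: $\rho([x,y])[a,b]_V=\rho(x)[\rho(y)a,b]_V-[\rho(y)\rho(x)a,b]_V-[\rho(x)\rho(y)b,a]_V+\rho(y)[\rho(x)b,a]_V$; $[\rho(x)a,\rho(y)b]_V=[\rho([x,y])a,b]_V-\rho(x)[\rho(y)a,b]_V+\rho(y)\rho(x)[a,b]_V+[\rho(y)\rho(x)b,a]_V$; $[\rho(x)a,[b,c]_V]_V=[[\rho(x)b,a]_V,c]_V-\rho(x)[[b,a]_V,c]_V-[\rho(x)[a,c]_V,b]_V-[[\rho(x)c,b]_V,a]_V$.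 A $\lambda$-weighted $\mathcal{O}$-operator associated to it is a linear $T:V\to A$ with $[T(a),T(b)]=T(\rho(T(a))b-\rho(T(b))a+\lambda[a,b]_V)$ for all $a,b\in V$. *)

From mathcomp Require Import all_boot all_algebra.
Set Implicit Arguments. Unset Strict Implicit. Unset Printing Implicit Defensive.
Import GRing.Theory.
Local Open Scope ring_scope.

Section MalcevDefs.
Variable K : fieldType.

Definition is_linear (U W : lmodType K) (f : U -> W) : Prop :=
  forall (k : K) (x y : U), f (k *: x + y) = k *: f x + f y.

Definition is_bilinear (U : lmodType K) (br : U -> U -> U) : Prop :=
  (forall y, is_linear (fun x => br x y)) /\ (forall x, is_linear (br x)).

Definition anticomm (U : lmodType K) (br : U -> U -> U) : Prop :=
  forall x y, br x y = - br y x.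

Definition jacobiator (U : lmodType K) (br : U -> U -> U) (x y z : U) : U :=
  br (br x y) z + br (br z x) y + br (br y z) x.

Definition malcev (U : lmodType K) (br : U -> U -> U) : Prop :=
  [/\ is_bilinear br, anticomm br &
      forall x y z, jacobiator br x y (br x z) = br (jacobiator br x y z) x].

Definition malcev_rep (A V : lmodType K) (br : A -> A -> A) (rho : A -> V -> V)
  : Prop :=
  [/\ (forall v : V, is_linear (fun x => rho x v)), (forall x, is_linear (rho x)) &
      forall x y z (v : V),
        rho (br (br x y) z) v =
          rho x (rho y (rho z v)) - rho z (rho x (rho y v))
          + rho y (rho (br z x) v) - rho (br y z) (rho x v)].

Definition module_malcev (A V : lmodType K) (br : A -> A -> A)
  (brV : V -> V -> V) (rho : A -> V -> V) : Prop :=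
  [/\ malcev brV, malcev_rep br rho,
      (forall (x y : A) (a b : V),
        rho (br x y) (brV a b) =
          rho x (brV (rho y a) b) - brV (rho y (rho x a)) b
          - brV (rho x (rho y b)) a + rho y (brV (rho x b) a)),
      (forall (x y : A) (a b : V),
        brV (rho x a) (rho y b) =
          brV (rho (br x y) a) b - rho x (brV (rho y a) b)
          + rho y (rho x (brV a b)) + brV (rho y (rho x b)) a) &
      (forall (x : A) (a b c : V),
        brV (rho x a) (brV b c) =
          brV (brV (rho x b) a) c - rho x (brV (brV b a) c)
          - brV (rho x (brV a c)) b - brV (brV (rho x c) b) a)].

Definition weighted_O_operator (A V : lmodType K) (br : A -> A -> A)
  (brV : V -> V -> V) (rho : A -> V -> V) (lam : K) (T : V -> A) : Prop :=
  is_linear T /\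
  forall a b : V,
    br (T a) (T b) = T (rho (T a) b - rho (T b) a + lam *: brV a b).

Definition bracketT (A V : lmodType K) (brV : V -> V -> V) (rho : A -> V -> V)
  (lam : K) (T : V -> A) (a b : V) : V :=
  rho (T a) b - rho (T b) a + lam *: brV a b.

Definition malcev_hom (U W : lmodType K) (brU : U -> U -> U)
  (brW : W -> W -> W) (f : U -> W) : Prop :=
  is_linear f /\ forall x y, f (brU x y) = brW (f x) (f y).

End MalcevDefs.

(* The bracket [a,b]_T is the pull-back of a semidirect product bracket along the
   graph map a |-> (T a, a) of A * V, which is injective, linear, and preserves
   brackets precisely because T is a lam-weighted O-operator.  Rescaling the bracket
   of V by lam preserves the axioms of an A-module Malcev algebra (each of them is
   homogeneous in that bracket), so it suffices to show that the semidirect product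
   (x, a), (y, b) |-> ([x, y], rho x b - rho y a + [a, b]_V) is a Malcev algebra.
   Its A-component is the Malcev identity of A; its V-component is a formal
   consequence of the module axioms, verified by normalizing bracket expressions to
   signed sums of monomials (anticommutativity is turned into a canonical ordering of
   bracket arguments, and [t, t] = 0 uses 2 != 0). *)

From mathcomp Require Import all_boot all_order all_algebra.
Set Implicit Arguments. Unset Strict Implicit. Unset Printing Implicit Defensive.
Import GRing.Theory.
Local Open Scope ring_scope.

Section LinearFacts.
Variables (K : fieldType) (U W : lmodType K) (f : U -> W).
Hypothesis f_lin : is_linear f.

Lemma is_linearD x y : f (x + y) = f x + f y.
Proof. by have := f_lin 1 x y; rewrite !scale1r. Qed.

Lemma is_linear0 : f 0 = 0.
Proof. by apply: (addrI (f 0)); rewrite -is_linearD !addr0. Qed.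

Lemma is_linearZ k x : f (k *: x) = k *: f x.
Proof. by rewrite -[k *: x]addr0 f_lin is_linear0 addr0. Qed.

Lemma is_linearN x : f (- x) = - f x.
Proof. by rewrite -scaleN1r is_linearZ scaleN1r. Qed.

Lemma is_linear_sum (I : Type) (r : seq I) (F : I -> U) :
  f (\sum_(i <- r) F i) = \sum_(i <- r) f (F i).
Proof. exact: (big_morph f is_linearD is_linear0). Qed.

End LinearFacts.

Section BilinearFacts.
Variables (K : fieldType) (U W P : lmodType K) (B : U -> W -> P).
Hypotheses (B_linl : forall w, is_linear (B^~ w)) (B_linr : forall u, is_linear (B u)).

Lemma bilinZl k u w : B (k *: u) w = k *: B u w.
Proof. exact: (is_linearZ (B_linl w)). Qed.

Lemma bilinZr k u w : B u (k *: w) = k *: B u w.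
Proof. exact: (is_linearZ (B_linr u)). Qed.

Lemma bilinDl u u' w : B (u + u') w = B u w + B u' w.
Proof. exact: (is_linearD (B_linl w)). Qed.

Lemma bilinDr u w w' : B u (w + w') = B u w + B u w'.
Proof. exact: (is_linearD (B_linr u)). Qed.

Lemma bilin_sum (I J : Type) (r : seq I) (s : seq J) (F : I -> U) (G : J -> W) :
  B (\sum_(i <- r) F i) (\sum_(j <- s) G j) = \sum_(i <- r) \sum_(j <- s) B (F i) (G j).
Proof.
rewrite (is_linear_sum (B_linl _)); apply: eq_bigr => i _.
exact: (is_linear_sum (B_linr _)).
Qed.

End BilinearFacts.

Section Malcev.
Variable K : fieldType.

Lemma anticomm_alternating (U : lmodType K) (br : U -> U -> U) :
  (2 : K) != 0 -> anticomm br -> forall u, br u u = 0.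
Proof.
move=> two_neq0 br_anti u; apply/eqP.
have : (2 : K) *: br u u == 0 by rewrite scaler_nat mulr2n {1}br_anti addNr.
by rewrite scaler_eq0 (negbTE two_neq0).
Qed.

Lemma jacobiator_scale (U : lmodType K) (br : U -> U -> U) k x y z :
  is_bilinear br ->
  jacobiator (fun u v => k *: br u v) x y z = k ^+ 2 *: jacobiator br x y z.
Proof.
by move=> [brl _]; rewrite /jacobiator !(bilinZl brl) !scalerA !scalerDr -expr2.
Qed.

Lemma malcev_scale (U : lmodType K) (br : U -> U -> U) k :
  malcev br -> malcev (fun u v => k *: br u v).
Proof.
move=> [[brl brr] br_anti br_malcev]; split.
- split=> [y c x x' | x c y y']; rewrite ?brl ?brr scalerDr !scalerA mulrC //.
- by move=> x y; rewrite br_anti scalerN.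
- move=> x y z; rewrite !jacobiator_scale //.
  have -> : jacobiator br x y (k *: br x z) = k *: jacobiator br x y (br x z).
    by rewrite /jacobiator !(bilinZr brr) !(bilinZl brl) !scalerDr.
  by rewrite br_malcev (bilinZl brl) !scalerA -exprSr exprS.
Qed.

Lemma module_malcev_scale (A V : lmodType K) (br : A -> A -> A) (brV : V -> V -> V)
    (rho : A -> V -> V) k :
  module_malcev br brV rho -> module_malcev br (fun a b => k *: brV a b) rho.
Proof.
move=> [brV_malcev rho_rep M1 M2 M3]; have [[brVl brVr] _ _] := brV_malcev.
have [_ rhor _] := rho_rep.
split=> //; first exact: malcev_scale.
- by move=> x y a b; rewrite !(is_linearZ (rhor _)) M1 !scalerDr !scalerN.
- by move=> x y a b; rewrite !(is_linearZ (rhor _)) M2 !scalerDr !scalerN.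
- move=> x a b c; rewrite !(is_linearZ (rhor _), bilinZl brVl, bilinZr brVr).
  by rewrite !scalerA M3 !scalerDr !scalerN.
Qed.

Lemma jacobiator_hom (U W : lmodType K) (brU : U -> U -> U) (brW : W -> W -> W)
    (f : U -> W) :
  is_linear f -> (forall u v, f (brU u v) = brW (f u) (f v)) ->
  forall x y z, f (jacobiator brU x y z) = jacobiator brW (f x) (f y) (f z).
Proof. by move=> f_lin f_hom x y z; rewrite /jacobiator !(is_linearD f_lin) !f_hom. Qed.

Lemma malcev_inj_hom (U W : lmodType K) (brU : U -> U -> U) (brW : W -> W -> W)
    (f : U -> W) :
  is_linear f -> injective f -> (forall u v, f (brU u v) = brW (f u) (f v)) ->
  malcev brW -> malcev brU.
Proof.
move=> f_lin f_inj f_hom [[brWl brWr] brW_anti brW_malcev]; split.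
- split=> [y k x x' | x k y y']; apply: f_inj; rewrite f_lin !f_hom f_lin;
    [exact: brWl | exact: brWr].
- by move=> x y; apply: f_inj; rewrite (is_linearN f_lin) !f_hom brW_anti.
- move=> x y z; apply: f_inj.
  by rewrite !f_hom !(jacobiator_hom f_lin f_hom) !f_hom brW_malcev.
Qed.

End Malcev.

(** * Normal forms of bracket expressions *)

Inductive exprA : Type :=
  | EAvar of nat | EAbr of exprA & exprA | EAadd of exprA & exprA.

Inductive exprV : Type :=
  | EVvar of nat | EVrho of exprA & exprV | EVbr of exprV & exprV
  | EVadd of exprV & exprV | EVopp of exprV.

Notation tree := (GenTree.tree nat).
Notation monomial := (int * tree)%type.

(* Label 0 encodes the action rho, label 1 a bracket. *)
Definition node (k : nat) (s t : tree) : tree := GenTree.Node k [:: s; t].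

Fixpoint tree_code (t : tree) : seq nat :=
  match t with
  | GenTree.Leaf i => [:: 0%N; i]
  | GenTree.Node k [:: s; u] => [:: 1%N, k & tree_code s ++ tree_code u ++ [:: 2%N]]
  | _ => [:: 3%N]
  end.

(* Soundness does not depend on this comparison; a strict total order makes the
   normal form of anticommutative brackets canonical. *)
Definition tree_lt (s t : tree) : bool :=
  (tree_code s < tree_code t :> seqlexi nat)%O.

Definition bracket_mon (p q : monomial) : monomial :=
  if p.2 == q.2 then (0, node 1%N p.2 q.2)
  else if tree_lt q.2 p.2 then (- (p.1 * q.1), node 1%N q.2 p.2)
  else (p.1 * q.1, node 1%N p.2 q.2).

Definition rho_mon (p q : monomial) : monomial := (p.1 * q.1, node 0%N p.2 q.2).

Definition opp_mon (p : monomial) : monomial := (- p.1, p.2).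

Fixpoint normA (e : exprA) : seq monomial :=
  match e with
  | EAvar i => [:: (1, GenTree.Leaf i)]
  | EAbr e1 e2 => allpairs bracket_mon (normA e1) (normA e2)
  | EAadd e1 e2 => normA e1 ++ normA e2
  end.

Fixpoint normV (e : exprV) : seq monomial :=
  match e with
  | EVvar i => [:: (1, GenTree.Leaf i)]
  | EVrho e1 e2 => allpairs rho_mon (normA e1) (normV e2)
  | EVbr e1 e2 => allpairs bracket_mon (normV e1) (normV e2)
  | EVadd e1 e2 => normV e1 ++ normV e2
  | EVopp e1 => map opp_mon (normV e1)
  end.

Fixpoint merge_mon (p : monomial) (l : seq monomial) : seq monomial :=
  match l with
  | [::] => [:: p]
  | q :: l' => if q.2 == p.2 then (q.1 + p.1, q.2) :: l' else q :: merge_mon p l'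
  end.

Definition collect (l : seq monomial) : seq monomial := foldr merge_mon [::] l.

Definition formally_zero (l : seq monomial) : bool :=
  all (fun m => m.1 == 0) (collect l).

Definition eqn_diff (e : exprV * exprV) : seq monomial :=
  normV e.1 ++ map opp_mon (normV e.2).

Definition flip_eqn (e : exprV * exprV) : exprV * exprV := (e.2, e.1).

Definition certifies (goal : exprV * exprV) (hyps : seq (exprV * exprV)) : bool :=
  formally_zero (eqn_diff goal ++ flatten (map (eqn_diff \o flip_eqn) hyps)).

Section Evaluation.
Variables (K : fieldType) (A V : lmodType K).
Variables (br : A -> A -> A) (brV : V -> V -> V) (rho : A -> V -> V).
Variables (varA : nat -> A) (varV : nat -> V).

Fixpoint evalA (e : exprA) : A :=
  match e with
  | EAvar i => varA i
  | EAbr e1 e2 => br (evalA e1) (evalA e2)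
  | EAadd e1 e2 => evalA e1 + evalA e2
  end.

Fixpoint evalV (e : exprV) : V :=
  match e with
  | EVvar i => varV i
  | EVrho e1 e2 => rho (evalA e1) (evalV e2)
  | EVbr e1 e2 => brV (evalV e1) (evalV e2)
  | EVadd e1 e2 => evalV e1 + evalV e2
  | EVopp e1 => - evalV e1
  end.

Fixpoint tree_evalA (t : tree) : A :=
  match t with
  | GenTree.Leaf i => varA i
  | GenTree.Node _ [:: s; u] => br (tree_evalA s) (tree_evalA u)
  | _ => 0
  end.

Fixpoint tree_evalV (t : tree) : V :=
  match t with
  | GenTree.Leaf i => varV i
  | GenTree.Node 0%N [:: s; u] => rho (tree_evalA s) (tree_evalV u)
  | GenTree.Node _ [:: s; u] => brV (tree_evalV s) (tree_evalV u)
  | _ => 0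
  end.

Definition mon_evalA (m : monomial) : A := m.1%:~R *: tree_evalA m.2.
Definition mon_evalV (m : monomial) : V := m.1%:~R *: tree_evalV m.2.

Hypothesis two_neq0 : (2 : K) != 0.
Hypotheses (br_bilin : is_bilinear br) (br_anti : anticomm br).
Hypotheses (brV_bilin : is_bilinear brV) (brV_anti : anticomm brV).
Hypotheses (rhol : forall v, is_linear (rho^~ v)) (rhor : forall x, is_linear (rho x)).

Lemma bracket_mon_eval (U : lmodType K) (B : U -> U -> U) (ev : tree -> U) p q :
  is_bilinear B -> anticomm B -> (forall s t, ev (node 1%N s t) = B (ev s) (ev t)) ->
  let eval m := m.1%:~R *: ev m.2 in
  eval (bracket_mon p q) = B (eval p) (eval q).
Proof.
move=> [Bl Br] B_anti ev_node eval.
rewrite /eval (bilinZl Bl) (bilinZr Br) scalerA -intrM /bracket_mon.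
case: eqP => [->|_] /=.
  by rewrite scale0r (anticomm_alternating two_neq0 B_anti) scaler0.
case: ifP => _ /=; rewrite ev_node //.
by rewrite [in RHS]B_anti intrN scaleNr scalerN.
Qed.

Lemma sum_allpairs (X Y Z : Type) (U W P : lmodType K) (B : U -> W -> P)
    (g : X -> Y -> Z) (e1 : X -> U) (e2 : Y -> W) (e3 : Z -> P) l1 l2 :
  (forall w, is_linear (B^~ w)) -> (forall u, is_linear (B u)) ->
  (forall x y, e3 (g x y) = B (e1 x) (e2 y)) ->
  \sum_(m <- allpairs g l1 l2) e3 m = B (\sum_(x <- l1) e1 x) (\sum_(y <- l2) e2 y).
Proof.
move=> Bl Br ge; rewrite bilin_sum // big_allpairs_dep.
by apply: eq_bigr => x _; apply: eq_bigr => y _; rewrite ge.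
Qed.

Lemma normA_sound e : \sum_(m <- normA e) mon_evalA m = evalA e.
Proof.
have [brl brr] := br_bilin.
elim: e => [i | e1 IH1 e2 IH2 | e1 IH1 e2 IH2] /=.
- by rewrite big_seq1 /mon_evalA scale1r.
- rewrite (sum_allpairs (e1 := mon_evalA) (e2 := mon_evalA) _ _ brl brr) ?IH1 ?IH2 //.
  by move=> p q; apply: bracket_mon_eval.
- by rewrite big_cat IH1 IH2.
Qed.

Lemma normV_sound e : \sum_(m <- normV e) mon_evalV m = evalV e.
Proof.
have [brVl brVr] := brV_bilin.
elim: e => [i | e1 e2 IH2 | e1 IH1 e2 IH2 | e1 IH1 e2 IH2 | e1 IH1] /=.
- by rewrite big_seq1 /mon_evalV scale1r.
- rewrite (sum_allpairs (e1 := mon_evalA) (e2 := mon_evalV) _ _ rhol rhor).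
    by rewrite normA_sound IH2.
  move=> p q.
  by rewrite /mon_evalV /mon_evalA (bilinZl rhol) (bilinZr rhor) scalerA intrM mulrC.
- rewrite (sum_allpairs (e1 := mon_evalV) (e2 := mon_evalV) _ _ brVl brVr) ?IH1 ?IH2 //.
  by move=> p q; apply: bracket_mon_eval.
- by rewrite big_cat IH1 IH2.
- rewrite big_map -IH1 -sumrN; apply: eq_bigr => p _.
  by rewrite /mon_evalV intrN scaleNr.
Qed.

Lemma merge_mon_sound p l :
  \sum_(m <- merge_mon p l) mon_evalV m = \sum_(m <- p :: l) mon_evalV m.
Proof.
elim: l => [|q l IH] //=; case: ifP => [/eqP q_p|_]; rewrite !big_cons.
  rewrite addrA; congr (_ + _).
  by rewrite /mon_evalV /= intrD scalerDl q_p addrC.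
by rewrite IH big_cons addrCA.
Qed.

Lemma collect_sound l : \sum_(m <- collect l) mon_evalV m = \sum_(m <- l) mon_evalV m.
Proof. by elim: l => [|p l IH] //=; rewrite merge_mon_sound !big_cons IH. Qed.

Lemma formally_zero_sound l : formally_zero l -> \sum_(m <- l) mon_evalV m = 0.
Proof.
rewrite /formally_zero -collect_sound; elim: (collect l) => [|p l' IH] /=.
  by rewrite big_nil.
by case/andP=> /eqP p0 /IH; rewrite big_cons /mon_evalV p0 scale0r add0r.
Qed.

Lemma eqn_diff_sound e : \sum_(m <- eqn_diff e) mon_evalV m = evalV e.1 - evalV e.2.
Proof.
rewrite big_cat big_map !normV_sound -(normV_sound e.2) -sumrN.
by congr (_ + _); apply: eq_bigr => p _; rewrite /mon_evalV intrN scaleNr.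
Qed.

Definition all_hold (hyps : seq (exprV * exprV)) : Prop :=
  foldr (fun e P => evalV e.1 = evalV e.2 /\ P) True hyps.

Theorem certified_eq goal hyps :
  certifies goal hyps -> all_hold hyps -> evalV goal.1 = evalV goal.2.
Proof.
move=> /formally_zero_sound + hyps_hold.
rewrite big_cat eqn_diff_sound big_flatten /= big_map.
have -> : \sum_(e <- hyps) \sum_(m <- eqn_diff (flip_eqn e)) mon_evalV m = 0.
  elim: hyps hyps_hold => [|e hs IH] /=; first by rewrite big_nil.
  by case=> e_holds /IH; rewrite big_cons eqn_diff_sound /= e_holds subrr add0r.
by rewrite addr0 => /eqP; rewrite subr_eq0 => /eqP.
Qed.

End Evaluation.

(** * The semidirect product *)

Definition semidirect_bracket (K : fieldType) (A V : lmodType K) (br : A -> A -> A)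
    (brV : V -> V -> V) (rho : A -> V -> V) (X Y : A * V) : A * V :=
  (br X.1 Y.1, rho X.1 Y.2 - rho Y.1 X.2 + brV X.2 Y.2).

Definition semidirectE (X Y : exprA * exprV) : exprA * exprV :=
  (EAbr X.1 Y.1, EVadd (EVadd (EVrho X.1 Y.2) (EVopp (EVrho Y.1 X.2))) (EVbr X.2 Y.2)).

Definition addE (X Y : exprA * exprV) : exprA * exprV := (EAadd X.1 Y.1, EVadd X.2 Y.2).

Definition jacobiatorE (X Y Z : exprA * exprV) : exprA * exprV :=
  addE (addE (semidirectE (semidirectE X Y) Z) (semidirectE (semidirectE Z X) Y))
       (semidirectE (semidirectE Y Z) X).

Definition subE (u v : exprV) : exprV := EVadd u (EVopp v).

Definition jacobiatorVE (a b c : exprV) : exprV :=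
  EVadd (EVadd (EVbr (EVbr a b) c) (EVbr (EVbr c a) b)) (EVbr (EVbr b c) a).

Definition malcevV_eqn (a b c : exprV) : exprV * exprV :=
  (jacobiatorVE a b (EVbr a c), EVbr (jacobiatorVE a b c) a).

Definition rep_eqn (x y z : exprA) (v : exprV) : exprV * exprV :=
  (EVrho (EAbr (EAbr x y) z) v,
   subE (EVadd (subE (EVrho x (EVrho y (EVrho z v))) (EVrho z (EVrho x (EVrho y v))))
               (EVrho y (EVrho (EAbr z x) v)))
        (EVrho (EAbr y z) (EVrho x v))).

Definition module1_eqn (x y : exprA) (a b : exprV) : exprV * exprV :=
  (EVrho (EAbr x y) (EVbr a b),
   EVadd (subE (subE (EVrho x (EVbr (EVrho y a) b)) (EVbr (EVrho y (EVrho x a)) b))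
               (EVbr (EVrho x (EVrho y b)) a))
         (EVrho y (EVbr (EVrho x b) a))).

Definition module2_eqn (x y : exprA) (a b : exprV) : exprV * exprV :=
  (EVbr (EVrho x a) (EVrho y b),
   EVadd (EVadd (subE (EVbr (EVrho (EAbr x y) a) b) (EVrho x (EVbr (EVrho y a) b)))
                (EVrho y (EVrho x (EVbr a b))))
         (EVbr (EVrho y (EVrho x b)) a)).

Definition module3_eqn (x : exprA) (a b c : exprV) : exprV * exprV :=
  (EVbr (EVrho x a) (EVbr b c),
   subE (subE (subE (EVbr (EVbr (EVrho x b) a) c) (EVrho x (EVbr (EVbr b a) c)))
              (EVbr (EVrho x (EVbr a c)) b))
        (EVbr (EVbr (EVrho x c) b) a)).

Definition semidirect_malcev_eqn (x y z : exprA) (a b c : exprV) : exprV * exprV :=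
  let X := (x, a) in let Y := (y, b) in let Z := (z, c) in
  ((jacobiatorE X Y (semidirectE X Z)).2, (semidirectE (jacobiatorE X Y Z) X).2).

(* The V-component of the Malcev identity of the semidirect product is, formally,
   the sum of these instances of the axioms, listed by decreasing number of
   V-brackets (degree 3, 2, 1, 0 in lam before rescaling). *)
Definition semidirect_malcev_certificate (x y z : exprA) (a b c : exprV) :
    seq (exprV * exprV) :=
  [:: malcevV_eqn a b c;
      module3_eqn z a a b; module3_eqn y a c a; flip_eqn (module3_eqn x c a b);
      flip_eqn (module3_eqn x b c a); flip_eqn (module3_eqn x a c b);
      flip_eqn (module3_eqn x a b c);
      module2_eqn y z a a; module2_eqn z x a b; module1_eqn x z b a; module1_eqn x y a c;
      module2_eqn x y c a; module2_eqn x x b c;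
      flip_eqn (rep_eqn y z x a); flip_eqn (rep_eqn z x y a); flip_eqn (rep_eqn x z y a);
      flip_eqn (rep_eqn x y z a); rep_eqn x z x b; rep_eqn x x y c].

Lemma semidirect_malcev_certified :
  let: (x, y, z) := (EAvar 0, EAvar 1, EAvar 2) in
  let: (a, b, c) := (EVvar 0, EVvar 1, EVvar 2) in
  certifies (semidirect_malcev_eqn x y z a b c) (semidirect_malcev_certificate x y z a b c).
Proof. by vm_compute. Qed.

Section Semidirect.
Variables (K : fieldType) (A V : lmodType K).
Variables (br : A -> A -> A) (brV : V -> V -> V) (rho : A -> V -> V).
Hypothesis two_neq0 : (2 : K) != 0.
Hypotheses (br_malcev : malcev br) (V_module : module_malcev br brV rho).

Local Notation sd := (semidirect_bracket br brV rho).

Lemma semidirect_malcev_snd x y z a b c :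
  (jacobiator sd (x, a) (y, b) (sd (x, a) (z, c))).2 =
  (sd (jacobiator sd (x, a) (y, b) (z, c)) (x, a)).2.
Proof.
have [[br_bilin br_anti _] [brV_malcev [rhol rhor rep] M1 M2 M3]] := (br_malcev, V_module).
have [brV_bilin brV_anti brV_id] := brV_malcev.
pose varA i := nth 0 [:: x; y; z] i; pose varV i := nth 0 [:: a; b; c] i.
apply: (certified_eq (varA := varA) (varV := varV) two_neq0 br_bilin br_anti brV_bilin
         brV_anti rhol rhor semidirect_malcev_certified).
rewrite /all_hold /=.
by repeat split; by [apply: brV_id | apply: M1 | apply: M2 | apply: M3 | apply: rep
                    | symmetry; apply: M3 | symmetry; apply: rep].
Qed.

Lemma malcev_semidirect : malcev sd.
Proof.
have [[[brl brr] br_anti br_id] [[[brVl brVr] brV_anti _] [rhol rhor _] _ _ _]] :=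
  (br_malcev, V_module).
have scale_combine (p q r p' q' r' : V) k :
    k *: (p - q + r) + (p' - q' + r') = k *: p + p' - (k *: q + q') + (k *: r + r').
  by rewrite scalerDr scalerBr addrACA (addrACA (k *: p)) -opprD.
split; first split.
- move=> [y b] k [x a] [x' a']; apply: injective_projections => /=; first exact: brl.
  by rewrite (bilinDl rhol) (bilinZl rhol) (bilinDr rhor) (bilinZr rhor)
             (bilinDl brVl) (bilinZl brVl) scale_combine.
- move=> [x a] k [y b] [y' b']; apply: injective_projections => /=; first exact: brr.
  by rewrite (bilinDr rhor) (bilinZr rhor) (bilinDl rhol) (bilinZl rhol)
             (bilinDr brVr) (bilinZr brVr) scale_combine.
- move=> [x a] [y b]; apply: injective_projections => /=; first exact: br_anti.
  by rewrite (brV_anti b a) opprD opprB opprK.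
- move=> [x a] [y b] [z c]; apply: injective_projections; first exact: br_id.
  exact: semidirect_malcev_snd.
Qed.

End Semidirect.

Unset Implicit Arguments.

Theorem corollary4p8 (K : fieldType) (charK0 : [pchar K] =i pred0)
  (A V : lmodType K) (br : A -> A -> A) (brV : V -> V -> V)
  (rho : A -> V -> V) (lam : K) (T : V -> A) :
  malcev br ->
  module_malcev br brV rho ->
  weighted_O_operator br brV rho lam T ->
  malcev (bracketT brV rho lam T) /\
  malcev_hom (bracketT brV rho lam T) br T.
Proof.
move=> br_malcev V_module [T_lin T_O].
have two_neq0 : (2 : K) != 0 by move/pcharf0P: charK0 => ->.
pose graph a := (T a, a).
have graph_hom a b : graph (bracketT brV rho lam T a b) =
    semidirect_bracket br (fun u v => lam *: brV u v) rho (graph a) (graph b).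
  by rewrite /graph /semidirect_bracket /= T_O.
split; last by split=> // a b; rewrite T_O.
apply: (malcev_inj_hom _ _ graph_hom).
- by move=> k a b; rewrite /graph T_lin.
- by move=> a b [].
- exact: (malcev_semidirect two_neq0 br_malcev (module_malcev_scale lam V_module)).
Qed.
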